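(* Assume $\tau_1\tau_2\|K\|^2\le1/2$ and $\tau_1\le1/(2L)$, that $x_0\in[0,1]^n$ and $y_0\in\mathbb R_+^{m_1}\times\mathbb R^{m_2}$, and that $\Phi$ is bounded below by $\Phi_*$ (i.e., $\Phi(x,y)\ge\Phi_*$ for all $x,y$). For $k\ge1$ define the residuals \[s_k^x=\frac{x_{k-1}-x_k}{\tau_1}+\nabla_x\hat{\mathcal L}(x_k,y_k)-\nabla_x\hat{\mathcal L}(x_{k-1},y_k),\qquad s_k^y=\frac{y_{k-1}-y_k}{\tau_2}-\nabla_y\hat{\mathcal L}(x_k,y_k)+\nabla_y\hat{\mathcal L}(\bar x_{k-1},y_k).\] Then for every $N\ge1$ there exists $k_0\le N$ such that \[s^x_{k_0}\in\nabla_x\hat{\mathcal L}(x_{k_0},y_{k_0})+\partial h_1(x_{k_0}),\qquad s^y_{k_0}\in-\nabla_y\hat{\mathcal L}(x_{k_0},y_{k_0})+\partial h_2(y_{k_0}),\] and \[\|s^x_{k_0}\|+\|s^y_{k_0}\|\le2\left[\left(2\|K\|+\frac3{2\tau_1}\right)^2\tau_1+\frac1{\tau_2}\right]^{1/2}\left[\frac{\Phi(x_0,y_0)-\Phi_*}{N}+\frac{2}{\tau_1N}\sum_{k=1}^N\|x_{k-1}\|^2+4\tau_2\|r\|^2\right]^{1/2}.\]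
   Context: Let $n,m_1,m_2$ be positive integers, $Q\in\mathbb R^{n\times n}$ symmetric, $c\in\mathbb R^n$, $A\in\mathbb R^{m_1\times n}$, $b\in\mathbb R^{m_1}$, $B\in\mathbb R^{m_2\times n}$, $d\in\mathbb R^{m_2}$. Let $K:=-\begin{pmatrix}A\\ B\end{pmatrix}$ and $r:=(b;d)$. Fix $\rho\ge0$ and let $\mathbf 1$ be the all-ones vector. Define $\hat{\mathcal L}(x,y):=\langle x,Qx\rangle+\langle c,x\rangle+\langle y,Kx+r\rangle+\rho\langle x,\mathbf 1-x\rangle$ (no convexity assumed), so $\nabla_x\hat{\mathcal L}(x,y)=c+\rho\mathbf 1+K^\top y+2Qx-2\rho x$ and $\nabla_y\hat{\mathcal L}(x,y)=Kx+r$. Let $Y:=\mathbb R_+^{m_1}\times\mathbb R^{m_2}$, $h_1$ the indicator of $[0,1]^n$, $h_2$ the indicator of $Y$ ($0$ on the set, $+\infty$ outside); $\partial h_1,\partial h_2$ denote their (convex) subdifferentials. $\Phi(x,y):=\hat{\mathcal L}(x,y)+h_1(x)-h_2(y)$. $L:=2(\|Q\|+\rho)$ with spectral norm. PDHG iterates with step sizes $\tau_1,\tau_2>0$: $x_{-1}:=x_0$, $\bar x_0:=x_0$, and for $k\ge1$: $y_k=\Pi_Y(y_{k-1}+\tau_2(K\bar x_{k-1}+r))$, $x_k=\Pi_{[0,1]^n}(x_{k-1}-\tau_1\nabla_x\hat{\mathcal L}(x_{k-1},y_k))$, $\bar x_k=2x_k-x_{k-1}$, with $\Pi$ the Euclidean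 projection. *)

From HB Require Import structures.
From mathcomp Require Import all_boot all_order all_algebra.
From mathcomp Require Import all_classical all_reals.
From mathcomp Require Import ereal.
Unset Printing Implicit Defensive.
Import Order.TTheory GRing.Theory Num.Theory.
Local Open Scope ring_scope.
Local Open Scope classical_set_scope.

Section Defs.
Context {R : realType}.

Definition dotv {n : nat} (u v : 'cV[R]_n) : R := \sum_(i < n) u i 0 * v i 0.
Definition enorm {n : nat} (u : 'cV[R]_n) : R := Num.sqrt (dotv u u).

Definition opnorm {m n : nat} (A : 'M[R]_(m, n)) : R :=
  sup [set enorm (A *m v) | v in [set v : 'cV[R]_n | enorm v <= 1]].

Definition is_proj {n : nat} (C : set 'cV[R]_n) (z p : 'cV[R]_n) : Prop :=
  C p /\ forall q, C q -> enorm (z - p) <= enorm (z - q).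

Definition indic {n : nat} (C : set 'cV[R]_n) (z : 'cV[R]_n) : \bar R :=
  if `[< C z >] then 0%E else +oo%E.

Definition subdiff {n : nat} (h : 'cV[R]_n -> \bar R) (z : 'cV[R]_n) : set 'cV[R]_n :=
  [set v | h z \is a fin_num /\
           forall w, (h z + (dotv v (w - z))%:E <= h w)%E].

Definition box01 (n : nat) : set 'cV[R]_n :=
  [set x | forall i, 0 <= x i 0 <= 1].

Definition Yset (m1 m2 : nat) : set 'cV[R]_(m1 + m2) :=
  [set y | forall i : 'I_m1, 0 <= y (lshift m2 i) 0].

Definition ones (n : nat) : 'cV[R]_n := const_mx 1.

Definition Kmat {m1 m2 n : nat} (A : 'M[R]_(m1, n)) (B : 'M[R]_(m2, n))
  : 'M[R]_(m1 + m2, n) := - col_mx A B.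
Definition rvec {m1 m2 : nat} (b : 'cV[R]_m1) (d : 'cV[R]_m2) : 'cV[R]_(m1 + m2) :=
  col_mx b d.

Definition Lhat {m n : nat} (Q : 'M[R]_n) (c : 'cV[R]_n) (K : 'M[R]_(m, n))
  (r : 'cV[R]_m) (rho : R) (x : 'cV[R]_n) (y : 'cV[R]_m) : R :=
  dotv x (Q *m x) + dotv c x + dotv y (K *m x + r) + rho * dotv x (ones n - x).

Definition gradx {m n : nat} (Q : 'M[R]_n) (c : 'cV[R]_n) (K : 'M[R]_(m, n))
  (rho : R) (x : 'cV[R]_n) (y : 'cV[R]_m) : 'cV[R]_n :=
  c + rho *: ones n + K^T *m y + 2%:R *: (Q *m x) - (2%:R * rho) *: x.

Definition grady {m n : nat} (K : 'M[R]_(m, n)) (r : 'cV[R]_m)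
  (x : 'cV[R]_n) : 'cV[R]_m := K *m x + r.

End Defs.

From HB Require Import structures.
From mathcomp Require Import all_boot all_order all_algebra.
From mathcomp Require Import all_classical all_reals.
From mathcomp Require Import ereal.
From mathcomp Require Import ring lra.
Import Order.TTheory GRing.Theory Num.Theory.
Local Open Scope ring_scope.
Local Open Scope classical_set_scope.

(* The primal update is a projected gradient step of length tau1 <= 1/(2L), so it
   decreases Lhat(., y_{k+1}) by at least (3/4)|x_{k+1} - x_k|^2 / tau1.  The dual
   update is a projection, so |y_{k+1} - y_k|^2 <= tau2 <K xbar_k + r, y_{k+1} - y_k>;
   with tau1 tau2 |K|^2 <= 1/2 and Young's inequality, the increase of Lhat in y is
   bounded by multiples of |xbar_k|^2 / tau1, |x_k|^2 / tau1 and tau2 |r|^2.  Summing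
   over N steps bounds the total of |dx|^2 / tau1 + |dy|^2 / tau2 by
   4/3 (Phi_0 - Phistar) + O(sum |x_k|^2 / tau1 + N tau2 |r|^2).  The residuals are
   bounded by alpha |dx_{k+1}| + beta |dx_k| + |dy_{k+1}| / tau2, so by Cauchy-Schwarz
   the step with the smallest weighted increment satisfies the estimate.  The
   inclusions hold because the residual of a projection onto a convex set is a normal
   vector, i.e. a subgradient of its indicator. *)

Section Euclidean.
Context {R : realType} {n : nat}.
Implicit Types (u v w : 'cV[R]_n) (a mu : R).

Lemma dotvC u v : dotv u v = dotv v u.
Proof. by apply: eq_bigr => i _; rewrite mulrC. Qed.

Lemma dotvDl u v w : dotv (u + v) w = dotv u w + dotv v w.
Proof. by rewrite /dotv -big_split; apply: eq_bigr => i _; rewrite !mxE mulrDl. Qed.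

Lemma dotvDr u v w : dotv w (u + v) = dotv w u + dotv w v.
Proof. by rewrite dotvC dotvDl !(dotvC w). Qed.

Lemma dotvZl a u v : dotv (a *: u) v = a * dotv u v.
Proof. by rewrite /dotv mulr_sumr; apply: eq_bigr => i _; rewrite !mxE mulrA. Qed.

Lemma dotvZr a u v : dotv v (a *: u) = a * dotv v u.
Proof. by rewrite dotvC dotvZl dotvC. Qed.

Lemma dotvNl u v : dotv (- u) v = - dotv u v.
Proof. by rewrite -scaleN1r dotvZl mulN1r. Qed.

Lemma dotvNr u v : dotv v (- u) = - dotv v u.
Proof. by rewrite dotvC dotvNl dotvC. Qed.

Lemma dotvBl u v w : dotv (u - v) w = dotv u w - dotv v w.
Proof. by rewrite dotvDl dotvNl. Qed.

Lemma dotvBr u v w : dotv w (u - v) = dotv w u - dotv w v.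
Proof. by rewrite dotvDr dotvNr. Qed.

Lemma dotv0l u : dotv 0 u = 0.
Proof. by rewrite /dotv big1 // => i _; rewrite mxE mul0r. Qed.

Lemma dotv0r u : dotv u 0 = 0.
Proof. by rewrite dotvC dotv0l. Qed.

Definition dotvE := (dotvDl, dotvDr, dotvBl, dotvBr, dotvNl, dotvNr, dotvZl, dotvZr).

Lemma dotv_mulmx {m} (M : 'M[R]_(m, n)) (u : 'cV[R]_m) v :
  dotv u (M *m v) = dotv (M^T *m u) v.
Proof.
rewrite /dotv.
under eq_bigr do rewrite mxE big_distrr.
under [RHS]eq_bigr do rewrite mxE big_distrl.
rewrite exchange_big; apply: eq_bigr => j _; apply: eq_bigr => i _.
by rewrite !mxE /=; ring.
Qed.

Lemma dotvv_ge0 u : 0 <= dotv u u.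
Proof. by apply: sumr_ge0 => i _; rewrite -expr2 sqr_ge0. Qed.

Lemma dotvv_eq0 u : dotv u u = 0 -> u = 0.
Proof.
move=> u0; apply/matrixP => i j; rewrite mxE (ord1 j).
have uu_ge0 (k : 'I_n) : xpredT k -> 0 <= u k 0 * u k 0 by rewrite -expr2 sqr_ge0.
by have /eqP := @psumr_eq0P R _ xpredT _ uu_ge0 u0 i isT; rewrite mulf_eq0 orbb => /eqP.
Qed.

Lemma sqr_coord_le_dotv u j : u j 0 ^+ 2 <= dotv u u.
Proof.
rewrite /dotv (bigD1 j) //= -expr2 lerDl.
by apply: sumr_ge0 => i _; rewrite -expr2 sqr_ge0.
Qed.

Lemma enorm_ge0 u : 0 <= enorm u.
Proof. exact: sqrtr_ge0. Qed.

Lemma sqr_enorm u : enorm u ^+ 2 = dotv u u.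
Proof. by rewrite sqr_sqrtr // dotvv_ge0. Qed.

Lemma enorm_eq0 u : enorm u = 0 -> u = 0.
Proof. by move=> u0; apply: dotvv_eq0; rewrite -sqr_enorm u0 expr0n. Qed.

Lemma enorm0 : enorm (0 : 'cV[R]_n) = 0.
Proof. by rewrite /enorm dotv0l sqrtr0. Qed.

Lemma enormZ a u : enorm (a *: u) = `|a| * enorm u.
Proof. by rewrite /enorm dotvZl dotvZr mulrA -expr2 sqrtrM ?sqr_ge0 // sqrtr_sqr. Qed.

Lemma enormN u : enorm (- u) = enorm u.
Proof. by rewrite -scaleN1r enormZ normrN1 mul1r. Qed.

Lemma dotv_le_enorm u v : dotv u v <= enorm u * enorm v.
Proof.
have [/enorm_eq0->|u0] := eqVneq (enorm u) 0; first by rewrite dotv0l enorm0 mul0r.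
have [/enorm_eq0->|v0] := eqVneq (enorm v) 0; first by rewrite dotv0r enorm0 mulr0.
have uv_gt0 : 0 < enorm u * enorm v by rewrite mulr_gt0 // lt_def ?u0 ?v0 enorm_ge0.
have := dotvv_ge0 (enorm v *: u - enorm u *: v).
rewrite !dotvE -!sqr_enorm (dotvC v u) => h.
have : 0 <= (enorm u * enorm v) * (enorm u * enorm v - dotv u v) by nra.
by rewrite pmulr_rge0 // subr_ge0.
Qed.

Lemma ler_enormD u v : enorm (u + v) <= enorm u + enorm v.
Proof.
rewrite -(ler_pXn2r (isT : (0 < 2)%N)) ?nnegrE ?addr_ge0 ?enorm_ge0 //.
rewrite sqr_enorm !dotvE -!sqr_enorm (dotvC v u).
by have := dotv_le_enorm u v; nra.
Qed.

Lemma ler_enormB u v : enorm (u - v) <= enorm u + enorm v.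
Proof. by rewrite -(enormN v) ler_enormD. Qed.

Lemma dotv_young u v mu : 0 < mu ->
  2%:R * dotv u v <= mu * dotv u u + mu^-1 * dotv v v.
Proof.
move=> mu_gt0.
have e : mu * (mu * dotv u u + mu^-1 * dotv v v - 2%:R * dotv u v)
         = dotv (mu *: u - v) (mu *: u - v).
  by rewrite !dotvE (dotvC v u); field; rewrite gt_eqF.
by rewrite -subr_ge0 -(@pmulr_rge0 _ mu _ mu_gt0) e dotvv_ge0.
Qed.

Lemma sqr_enormD_le u v mu : 0 < mu ->
  enorm (u + v) ^+ 2 <= (1 + mu) * enorm u ^+ 2 + (1 + mu^-1) * enorm v ^+ 2.
Proof.
move=> mu_gt0; rewrite !sqr_enorm !dotvE (dotvC v u).
by have := dotv_young u v mu mu_gt0; lra.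
Qed.

Lemma sqr_enorm_extrapolate u v :
  enorm (2%:R *: u - v) ^+ 2 <= 6%:R * enorm u ^+ 2 + 3%:R * enorm v ^+ 2.
Proof.
rewrite !sqr_enorm !dotvE (dotvC v u).
by have := dotvv_ge0 (u + v); rewrite !dotvE (dotvC v u); lra.
Qed.

End Euclidean.

Section OperatorNorm.
Context {R : realType} {m n : nat} (M : 'M[R]_(m, n)).

Let unit_ball_image := [set enorm (M *m v) | v in [set v : 'cV[R]_n | enorm v <= 1]].

Lemma opnorm_has_ubound : has_ubound unit_ball_image.
Proof.
exists (Num.sqrt (\sum_i (\sum_j `|M i j|) ^+ 2)) => _ [v v_le1 <-].
rewrite /enorm ler_sqrt; last by apply: sumr_ge0 => i _; rewrite sqr_ge0.
apply: ler_sum => i _; rewrite -expr2 mxE.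
have coord_le1 j : `|v j 0| <= 1.
  rewrite -(ler_pXn2r (isT : (0 < 2)%N)) ?nnegrE // real_normK ?num_real // expr1n.
  apply: (le_trans (sqr_coord_le_dotv v j)); rewrite -sqr_enorm.
  by have := enorm_ge0 v; have : enorm v <= 1 := v_le1; nra.
have row_le : `|\sum_j M i j * v j 0| <= \sum_j `|M i j|.
  apply: (le_trans (ler_norm_sum _ _ _)); apply: ler_sum => j _.
  by rewrite normrM -[leRHS]mulr1 ler_wpM2l.
by rewrite -real_normK ?num_real // ler_pM.
Qed.

Lemma opnorm_ge0 : 0 <= opnorm M.
Proof.
have zero_in : unit_ball_image (enorm (M *m 0)) by exists 0; rewrite //= enorm0 ler01.
by have := ub_le_sup opnorm_has_ubound zero_in; rewrite mulmx0 enorm0.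
Qed.

Lemma enorm_mulmx_le v : enorm (M *m v) <= opnorm M * enorm v.
Proof.
have [/enorm_eq0->|v0] := eqVneq (enorm v) 0; first by rewrite mulmx0 !enorm0 mulr0.
have v_gt0 : 0 < enorm v by rewrite lt_def v0 enorm_ge0.
have unit_v : unit_ball_image (enorm (M *m ((enorm v)^-1 *: v))).
  exists ((enorm v)^-1 *: v) => //=.
  by rewrite enormZ ger0_norm ?invr_ge0 ?enorm_ge0 // mulVf.
have := ub_le_sup opnorm_has_ubound unit_v.
by rewrite -scalemxAr enormZ ger0_norm ?invr_ge0 ?enorm_ge0 // mulrC ler_pdivrMr.
Qed.

Lemma sqr_enorm_mulmx_le v : enorm (M *m v) ^+ 2 <= opnorm M ^+ 2 * enorm v ^+ 2.
Proof.
rewrite -exprMn ler_pXn2r ?nnegrE ?mulr_ge0 ?opnorm_ge0 ?enorm_ge0 //.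
exact: enorm_mulmx_le.
Qed.

End OperatorNorm.

Definition convex_set {R : realType} {n : nat} (C : set 'cV[R]_n) :=
  forall p q t, C p -> C q -> 0 <= t <= 1 -> C (p + t *: (q - p)).

Lemma box01_convex {R : realType} (n : nat) : convex_set (box01 (R:=R) n).
Proof.
move=> p q t p_in q_in /andP[t_ge0 t_le1] i; rewrite !mxE.
by have /andP[? ?] := p_in i; have /andP[? ?] := q_in i; apply/andP; split; nra.
Qed.

Lemma Yset_convex {R : realType} (m1 m2 : nat) : convex_set (Yset (R:=R) m1 m2).
Proof.
move=> p q t p_in q_in /andP[t_ge0 t_le1] i; rewrite !mxE.
by have := p_in i; have := q_in i; nra.
Qed.

Section Projection.
Context {R : realType} {n : nat} {C : set 'cV[R]_n}.
Hypothesis C_convex : convex_set C.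

Lemma proj_variational {z p} : is_proj C z p -> forall q, C q -> dotv (z - p) (q - p) <= 0.
Proof.
move=> [p_in p_min] q q_in.
set a := dotv (z - p) (q - p); set b := dotv (q - p) (q - p).
have b_ge0 : 0 <= b by apply: dotvv_ge0.
have seg t : 0 <= t <= 1 -> 2%:R * t * a <= t ^+ 2 * b.
  move=> t01; have := p_min _ (C_convex _ _ _ p_in q_in t01).
  rewrite /enorm ler_sqrt ?dotvv_ge0 // opprD addrA /a /b.
  by move: (z - p) (q - p) => u e; rewrite !dotvE (dotvC e u); lra.
rewrite leNgt; apply/negP => a_gt0.
have ab_gt0 : 0 < a + b by lra.
set t := a / (a + b).
have t_gt0 : 0 < t by rewrite divr_gt0.
have t_le1 : t <= 1 by rewrite ler_pdivrMr // mul1r; lra.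
have tab : t * (a + b) = a by rewrite divfK ?gt_eqF.
have := seg t; rewrite t_le1 ltW //= => /(_ isT) seg_t.
by clearbody t; nra.
Qed.

Lemma proj_subdiff_indic {z p a} : is_proj C z p -> 0 <= a ->
  subdiff (indic C) p (a *: (z - p)).
Proof.
move=> proj_p a_ge0; rewrite /subdiff /indic asboolT; last exact: proj_p.1.
split => // w; rewrite add0e.
have [w_in|w_out] := pselect (C w); last by rewrite asboolF // leey.
rewrite asboolT // lee_fin dotvZl.
by rewrite mulr_ge0_le0 // proj_variational.
Qed.

Lemma proj_step_le {p g t q} : C p -> is_proj C (p + t *: g) q ->
  enorm (q - p) ^+ 2 <= t * dotv g (q - p).
Proof.
move=> p_in proj_q; have := proj_variational proj_q _ p_in.
rewrite [p + _]addrC -addrA -[p - q]opprB sqr_enorm.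
by move: (q - p) => e; rewrite !dotvE; lra.
Qed.

End Projection.

Section LagrangianExpansion.
Context {R : realType} {m n : nat} (Q : 'M[R]_n) (c : 'cV[R]_n) (K : 'M[R]_(m, n))
  (r : 'cV[R]_m) (rho : R).
Hypotheses (Q_sym : Q^T = Q) (rho_ge0 : 0 <= rho).

Lemma Lhat_diff_x x D y :
  Lhat Q c K r rho (x + D) y - Lhat Q c K r rho x y =
  dotv (gradx Q c K rho x y) D + dotv D (Q *m D) - rho * dotv D D.
Proof.
rewrite /Lhat /gradx !mulmxDr !dotvE (dotv_mulmx Q x D) (dotv_mulmx K y D) Q_sym.
by rewrite (dotvC D (Q *m x)) (dotvC D x) (dotvC D (ones n)); ring.
Qed.

Lemma Lhat_diff_y x y y' :
  Lhat Q c K r rho x y' - Lhat Q c K r rho x y = dotv (y' - y) (K *m x + r).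
Proof. by rewrite /Lhat dotvBl; ring. Qed.

Lemma gradx_lipschitz x x' y :
  enorm (gradx Q c K rho x' y - gradx Q c K rho x y)
    <= 2%:R * (opnorm Q + rho) * enorm (x' - x).
Proof.
have -> : gradx Q c K rho x' y - gradx Q c K rho x y =
          2%:R *: (Q *m (x' - x)) - (2%:R * rho) *: (x' - x).
  rewrite /gradx mulmxBr; move: (Q *m x') (Q *m x) (K^T *m y) => a b e.
  by apply/matrixP => i j; rewrite !mxE; ring.
apply: (le_trans (ler_enormB _ _)).
rewrite !enormZ !ger0_norm ?mulr_ge0 //.
by have := enorm_mulmx_le Q (x' - x); lra.
Qed.

Lemma Lhat_descent tau xp xk y : 0 < tau -> opnorm Q * tau <= 4%:R^-1 ->
  enorm (xk - xp) ^+ 2 <= tau * dotv (- gradx Q c K rho xp y) (xk - xp) ->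
  Lhat Q c K r rho xk y - Lhat Q c K r rho xp y
    <= - (3%:R / 4%:R) / tau * enorm (xk - xp) ^+ 2.
Proof.
move=> tau_gt0 Q_tau step.
have -> : Lhat Q c K r rho xk y = Lhat Q c K r rho (xp + (xk - xp)) y.
  by rewrite addrC subrK.
rewrite Lhat_diff_x; rewrite dotvNl in step.
move: (xk - xp) (gradx Q c K rho xp y) step => D G step.
have QD_le : dotv D (Q *m D) <= opnorm Q * enorm D ^+ 2.
  apply: (le_trans (dotv_le_enorm _ _)).
  by have := enorm_mulmx_le Q D; have := enorm_ge0 D; have := enorm_ge0 (Q *m D); nra.
have rhoD_ge0 : 0 <= rho * dotv D D by rewrite mulr_ge0 // dotvv_ge0.
have GD_le : dotv G D <= - tau^-1 * enorm D ^+ 2.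
  have -> : dotv G D = tau^-1 * (tau * dotv G D) by rewrite mulKf ?gt_eqF.
  by rewrite mulNr -mulrN ler_pM2l ?invr_gt0 //; lra.
have Q_le : opnorm Q <= 4%:R^-1 / tau by rewrite ler_pdivlMr.
have := ler_wpM2r (sqr_ge0 (enorm D)) Q_le.
by rewrite -sqr_enorm in rhoD_ge0 *; lra.
Qed.

End LagrangianExpansion.

Section DualIncrement.
Context {R : realType} {m n : nat} {K : 'M[R]_(m, n)} {r : 'cV[R]_m} {tau1 tau2 : R}.
Hypotheses (tau1_gt0 : 0 < tau1) (tau2_gt0 : 0 < tau2).
Hypothesis step_dual : tau1 * tau2 * opnorm K ^+ 2 <= 2%:R^-1.

Lemma sqr_enorm_affine_le v mu : 0 < mu ->
  tau2 * enorm (K *m v + r) ^+ 2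
    <= (1 + mu) / (2%:R * tau1) * enorm v ^+ 2 + (1 + mu^-1) * tau2 * enorm r ^+ 2.
Proof.
move=> mu_gt0.
have K_le : tau2 * opnorm K ^+ 2 <= (2%:R * tau1)^-1.
  by rewrite invfM ler_pdivlMr // mulrC mulrA.
have Kv_le : tau2 * enorm (K *m v) ^+ 2 <= (2%:R * tau1)^-1 * enorm v ^+ 2.
  apply: (le_trans (ler_wpM2l (ltW tau2_gt0) (sqr_enorm_mulmx_le K v))).
  by rewrite mulrA ler_wpM2r ?sqr_ge0.
have := ler_wpM2l (ltW tau2_gt0) (sqr_enormD_le (K *m v) r mu mu_gt0).
have := ler_wpM2l (addr_ge0 ler01 (ltW mu_gt0)) Kv_le.
by rewrite invfM; lra.
Qed.

(* Young's inequality with weight 1/(3 tau2) on the cross term and the splittings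
   (1 + 1/5, 1 + 5) for [K xb + r], (1 + 1/3, 1 + 3) for [K xp + r]: these keep the
   totals below the constants 8 / tau1 and 16 tau2 of the final estimate. *)
Lemma dual_increment_le d xb xp :
  enorm d ^+ 2 <= tau2 * dotv (K *m xb + r) d ->
  tau2^-1 * enorm d ^+ 2 + 4%:R / 3%:R * dotv d (K *m xp + r)
    <= 11%:R / 15%:R / tau1 * enorm xb ^+ 2 + 4%:R / 3%:R / tau1 * enorm xp ^+ 2
       + 46%:R / 3%:R * tau2 * enorm r ^+ 2.
Proof.
set h := K *m xb + r; set g := K *m xp + r => step.
have d_le : enorm d <= tau2 * enorm h.
  have sq : enorm d * enorm d <= tau2 * enorm h * enorm d.
    rewrite -expr2 -mulrA; apply: (le_trans step).
    by rewrite ler_wpM2l ?dotv_le_enorm // ltW.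
  have [->|d_neq0] := eqVneq (enorm d) 0; first by rewrite mulr_ge0 ?enorm_ge0 ?ltW.
  by move: sq; rewrite ler_pM2r // lt_def d_neq0 enorm_ge0.
have d_sqr_le : tau2^-1 * enorm d ^+ 2 <= tau2 * enorm h ^+ 2.
  rewrite ler_pdivrMl // mulrA -expr2 -exprMn.
  by rewrite ler_pXn2r ?nnegrE ?enorm_ge0 ?mulr_ge0 ?enorm_ge0 // ltW.
have dg_le : 2%:R * dotv d g <= tau2^-1 / 3%:R * enorm d ^+ 2 + 3%:R * tau2 * enorm g ^+ 2.
  have mu_gt0 : 0 < tau2^-1 / 3%:R by rewrite divr_gt0 ?invr_gt0.
  have := dotv_young d g _ mu_gt0.
  by rewrite invfM !invrK -!sqr_enorm; lra.
have fifth_gt0 : (0 : R) < 5%:R^-1 by rewrite invr_gt0.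
have third_gt0 : (0 : R) < 3%:R^-1 by rewrite invr_gt0.
have := sqr_enorm_affine_le xb _ fifth_gt0.
have := sqr_enorm_affine_le xp _ third_gt0.
by rewrite !invrK -/h -/g invfM; lra.
Qed.

End DualIncrement.

Section RealInequalities.
Context {R : realType}.

Lemma sqr_wmean_le (alpha beta a b : R) : 0 <= alpha -> 0 <= beta ->
  (alpha * a + beta * b) ^+ 2 <= (alpha + beta) * (alpha * a ^+ 2 + beta * b ^+ 2).
Proof.
move=> alpha_ge0 beta_ge0; rewrite -subr_ge0.
have -> : (alpha + beta) * (alpha * a ^+ 2 + beta * b ^+ 2) - (alpha * a + beta * b) ^+ 2
          = alpha * beta * (a - b) ^+ 2 by ring.
by rewrite mulr_ge0 ?sqr_ge0 ?mulr_ge0.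
Qed.

Lemma addr_le_sqrt_mul (p q u v : R) : 0 < p -> 0 < q -> 0 <= u -> 0 <= v ->
  u + v <= Num.sqrt (p + q) * Num.sqrt (u ^+ 2 / p + v ^+ 2 / q).
Proof.
move=> p_gt0 q_gt0 u_ge0 v_ge0.
have uv_ge0 : 0 <= u + v by rewrite addr_ge0.
rewrite -sqrtrM; last by rewrite addr_ge0 ?ltW.
rewrite -(ger0_norm uv_ge0) -sqrtr_sqr.
rewrite ler_sqrt; last by rewrite mulr_ge0 ?addr_ge0 ?divr_ge0 ?sqr_ge0 ?ltW.
rewrite -subr_ge0.
have -> : (p + q) * (u ^+ 2 / p + v ^+ 2 / q) - (u + v) ^+ 2
          = (q * u - p * v) ^+ 2 / (p * q).
  by field; rewrite !gt_eqF.
by rewrite divr_ge0 ?sqr_ge0 // ltW // mulr_gt0.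
Qed.

Lemma exists_le_mean (F : nat -> R) N M : (0 < N)%N ->
  \sum_(0 <= k < N) F k <= N%:R * M -> exists2 k, (k < N)%N & F k <= M.
Proof.
move=> N_gt0 sum_le.
have [//|no_k] := pselect (exists2 k, (k < N)%N & F k <= M).
have all_gt k : (0 <= k < N)%N -> M < F k.
  by move=> /andP[_ k_lt]; rewrite ltNge; apply/negP => Fk_le; apply: no_k; exists k.
have := @ltr_sum_nat R 0 N (fun=> M) F N_gt0 all_gt.
by rewrite sumr_const_nat subn0 -mulr_natl ltNge sum_le.
Qed.

Lemma sum_le_sum_succ (F : nat -> R) N : F 0%N = 0 -> (forall k, 0 <= F k) ->
  \sum_(0 <= k < N) F k <= \sum_(0 <= k < N) F k.+1.
Proof.
move=> F0 F_ge0; apply: (le_trans (y := \sum_(0 <= k < N.+1) F k)).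
  by rewrite big_nat_recr //= lerDl.
by rewrite big_nat_recl // F0 add0r.
Qed.

End RealInequalities.

(* Since [0.-1 = 0], [extrapolate x 0 = x 0]: this is the convention x_{-1} := x_0. *)
Definition extrapolate {R : realType} {n : nat} (x : nat -> 'cV[R]_n) k : 'cV[R]_n :=
  2%:R *: x k - x k.-1.

Lemma sum_sqr_extrapolate {R : realType} {n : nat} (x : nat -> 'cV[R]_n) N :
  \sum_(0 <= k < N) enorm (extrapolate x k) ^+ 2
    <= 9%:R * \sum_(0 <= k < N) enorm (x k) ^+ 2.
Proof.
case: N => [|N]; first by rewrite !big_geq // mulr0.
rewrite !big_nat_recl //= mulrDr /extrapolate /=.
have -> : 2%:R *: x 0%N - x 0%N = x 0%N by rewrite scaler_nat mulr2n addrK.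
have head_le : \sum_(0 <= k < N) enorm (x k) ^+ 2 <= enorm (x 0%N) ^+ 2
                 + \sum_(0 <= k < N) enorm (x k.+1) ^+ 2.
  apply: (le_trans (y := \sum_(0 <= k < N.+1) enorm (x k) ^+ 2)).
    by rewrite big_nat_recr //= lerDl sqr_ge0.
  by rewrite big_nat_recl.
have tail_le : \sum_(0 <= k < N) enorm (2%:R *: x k.+1 - x k) ^+ 2
    <= 6%:R * \sum_(0 <= k < N) enorm (x k.+1) ^+ 2 + 3%:R * \sum_(0 <= k < N) enorm (x k) ^+ 2.
  rewrite !mulr_sumr -big_split /=; apply: ler_sum_nat => k _.
  exact: sqr_enorm_extrapolate.
by have := sqr_ge0 (enorm (x 0%N)); lra.
Qed.

Section PDHG.
Context {R : realType} {n m : nat} {Q : 'M[R]_n} {c : 'cV[R]_n} {K : 'M[R]_(m, n)}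
  {r : 'cV[R]_m} {rho tau1 tau2 Phistar : R} {X : set 'cV[R]_n} {Y : set 'cV[R]_m}
  {x : nat -> 'cV[R]_n} {y : nat -> 'cV[R]_m}.
Hypotheses (X_convex : convex_set X) (Y_convex : convex_set Y).
Hypotheses (Q_sym : Q^T = Q) (rho_ge0 : 0 <= rho) (tau1_gt0 : 0 < tau1) (tau2_gt0 : 0 < tau2).
Hypothesis step_dual : tau1 * tau2 * opnorm K ^+ 2 <= 2%:R^-1.
Hypothesis step_primal : tau1 <= (2%:R * (2%:R * (opnorm Q + rho)))^-1.
Hypotheses (x0_in : X (x 0%N)) (y0_in : Y (y 0%N)).
Hypothesis y_step : forall k, is_proj Y (y k + tau2 *: (K *m extrapolate x k + r)) (y k.+1).
Hypothesis x_step : forall k, is_proj X (x k - tau1 *: gradx Q c K rho (x k) (y k.+1)) (x k.+1).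
Hypothesis Lhat_ge : forall u v, X u -> Y v -> Phistar <= Lhat Q c K r rho u v.

(* Iterations are indexed from 0: step k produces (x_{k+1}, y_{k+1}), and [res_x k],
   [res_y k] are the residuals s^x_{k+1}, s^y_{k+1} of the paper. *)
Definition res_x k := tau1^-1 *: (x k - x k.+1)
  + gradx Q c K rho (x k.+1) (y k.+1) - gradx Q c K rho (x k) (y k.+1).
Definition res_y k := tau2^-1 *: (y k - y k.+1)
  - grady K r (x k.+1) + grady K r (extrapolate x k).

Lemma step_primal_mul : tau1 * (4%:R * (opnorm Q + rho)) <= 1.
Proof.
have [->|Qrho_neq0] := eqVneq (opnorm Q + rho) 0; first by rewrite !mulr0 ler01.
have Qrho_gt0 : 0 < opnorm Q + rho by rewrite lt_def Qrho_neq0 addr_ge0 ?opnorm_ge0.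
move: step_primal; rewrite -[X in _ <= X]div1r ler_pdivlMr ?mulr_gt0 //.
by rewrite mulrA -natrM.
Qed.

Lemma opnormQ_tau1_le : opnorm Q * tau1 <= 4%:R^-1.
Proof. by have := step_primal_mul; have := mulr_ge0 (ltW tau1_gt0) rho_ge0; lra. Qed.

Lemma lipschitz_tau1_le : 2%:R * (opnorm Q + rho) <= 2%:R^-1 / tau1.
Proof. by rewrite ler_pdivlMr //; have := step_primal_mul; lra. Qed.

Lemma x_in k : X (x k).
Proof. by case: k => [|k] //; case: (x_step k). Qed.

Lemma y_in k : Y (y k).
Proof. by case: k => [|k] //; case: (y_step k). Qed.

Let tau1_inv_ge0 : 0 <= tau1^-1. Proof. by rewrite invr_ge0 ltW. Qed.
Let tau2_inv_ge0 : 0 <= tau2^-1. Proof. by rewrite invr_ge0 ltW. Qed.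

Lemma res_x_subdiff k : exists v, subdiff (indic X) (x k.+1) v /\
  res_x k = gradx Q c K rho (x k.+1) (y k.+1) + v.
Proof.
exists (tau1^-1 *: (x k - tau1 *: gradx Q c K rho (x k) (y k.+1) - x k.+1)); split.
  by apply: proj_subdiff_indic tau1_inv_ge0.
by apply/matrixP => i j; rewrite !mxE; field; rewrite gt_eqF.
Qed.

Lemma res_y_subdiff k : exists w, subdiff (indic Y) (y k.+1) w /\
  res_y k = - grady K r (x k.+1) + w.
Proof.
exists (tau2^-1 *: (y k + tau2 *: grady K r (extrapolate x k) - y k.+1)); split.
  by apply: proj_subdiff_indic tau2_inv_ge0.
by apply/matrixP => i j; rewrite !mxE; field; rewrite gt_eqF.
Qed.

Let Dx k := enorm (x k - x k.-1) ^+ 2.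
Let Dy k := enorm (y k - y k.-1) ^+ 2.
Let Phi k := Lhat Q c K r rho (x k) (y k).

Lemma energy_step k :
  tau1^-1 * Dx k.+1 + tau2^-1 * Dy k.+1
    <= 4%:R / 3%:R * (Phi k - Phi k.+1)
       + 11%:R / 15%:R / tau1 * enorm (extrapolate x k) ^+ 2
       + 4%:R / 3%:R / tau1 * enorm (x k) ^+ 2 + 46%:R / 3%:R * tau2 * enorm r ^+ 2.
Proof.
have proj_x := x_step k; rewrite -scalerN in proj_x.
have := Lhat_descent Q c K r rho Q_sym rho_ge0 _ _ _ _ tau1_gt0 opnormQ_tau1_le
  (proj_step_le X_convex (x_in k) proj_x).
have := Lhat_diff_y Q c K r rho (x k) (y k) (y k.+1).
have := dual_increment_le tau1_gt0 tau2_gt0 step_dual _ _ (x k)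
  (proj_step_le Y_convex (y_in k) (y_step k)).
by rewrite /Dx /Dy /Phi /=; lra.
Qed.

Lemma energy_sum N :
  \sum_(0 <= k < N) (tau1^-1 * Dx k.+1 + tau2^-1 * Dy k.+1)
    <= 4%:R / 3%:R * (Phi 0%N - Phi N)
       + 119%:R / 15%:R / tau1 * \sum_(0 <= k < N) enorm (x k) ^+ 2
       + 46%:R / 3%:R * tau2 * enorm r ^+ 2 * N%:R.
Proof.
apply: (le_trans (ler_sum_nat (fun k _ => energy_step k))).
rewrite !big_split /= -!mulr_sumr sumr_const_nat subn0 -mulr_natr.
have -> : \sum_(0 <= k < N) (Phi k - Phi k.+1) = Phi 0%N - Phi N.
  rewrite -(opprB (Phi N)) -telescope_sumr // -sumrN.
  by apply: eq_bigr => k _; rewrite opprB.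
by have := ler_wpM2l tau1_inv_ge0 (sum_sqr_extrapolate x N); lra.
Qed.

Let alpha := 3%:R / (2%:R * tau1) + opnorm K.
Let beta := opnorm K.

Lemma residual_le k :
  enorm (res_x k) + enorm (res_y k)
    <= alpha * enorm (x k.+1 - x k) + beta * enorm (x k - x k.-1)
       + tau2^-1 * enorm (y k.+1 - y k).
Proof.
have res_x_le : enorm (res_x k) <= 3%:R / (2%:R * tau1) * enorm (x k.+1 - x k).
  rewrite /res_x -addrA; apply: (le_trans (ler_enormD _ _)).
  rewrite enormZ (ger0_norm tau1_inv_ge0) -[x k - _]opprB enormN.
  have := gradx_lipschitz Q c K rho rho_ge0 (x k) (x k.+1) (y k.+1).
  have := ler_wpM2r (enorm_ge0 (x k.+1 - x k)) lipschitz_tau1_le.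
  by rewrite invfM; lra.
have -> : res_y k = K *m ((x k - x k.-1) - (x k.+1 - x k)) - tau2^-1 *: (y k.+1 - y k).
  rewrite /res_y /grady /extrapolate !(mulmxBr, mulmxDr) -scalemxAr.
  move: (K *m x k.+1) (K *m x k) (K *m x k.-1) => a b e.
  by apply/matrixP => i j; rewrite !mxE; ring.
apply: (le_trans (lerD res_x_le (ler_enormB _ _))).
rewrite enormZ (ger0_norm tau2_inv_ge0).
have := enorm_mulmx_le K (x k - x k.-1 - (x k.+1 - x k)).
have := ler_wpM2l (opnorm_ge0 K) (ler_enormB (x k - x k.-1) (x k.+1 - x k)).
by rewrite /alpha /beta; lra.
Qed.

Let beta_ge0 : 0 <= beta. Proof. exact: opnorm_ge0. Qed.
Let alpha_ge0 : 0 <= alpha.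
Proof. by rewrite addr_ge0 ?opnorm_ge0 // divr_ge0 // mulr_ge0 // ltW. Qed.
Let alpha_beta_gt0 : 0 < alpha + beta.
Proof. by rewrite ltr_wpDr ?opnorm_ge0 // ltr_wpDr ?opnorm_ge0 // divr_gt0 ?mulr_gt0. Qed.

Let W k := (alpha * Dx k.+1 + beta * Dx k) / ((alpha + beta) * tau1) + tau2^-1 * Dy k.+1.

Lemma residual_le_sqrt k :
  enorm (res_x k) + enorm (res_y k)
    <= Num.sqrt ((alpha + beta) ^+ 2 * tau1 + tau2^-1) * Num.sqrt (W k).
Proof.
have p_gt0 : 0 < (alpha + beta) ^+ 2 * tau1 by rewrite mulr_gt0 ?exprn_gt0.
have q_gt0 : 0 < tau2^-1 by rewrite invr_gt0.
apply: (le_trans (residual_le k)).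
have u_ge0 : 0 <= alpha * enorm (x k.+1 - x k) + beta * enorm (x k - x k.-1).
  by rewrite addr_ge0 ?mulr_ge0 ?enorm_ge0 ?alpha_ge0 ?beta_ge0.
have v_ge0 : 0 <= tau2^-1 * enorm (y k.+1 - y k) by rewrite mulr_ge0 ?enorm_ge0.
apply: (le_trans (addr_le_sqrt_mul _ _ _ _ p_gt0 q_gt0 u_ge0 v_ge0)).
rewrite ler_wpM2l ?sqrtr_ge0 //; apply: ler_wsqrtr; rewrite /W /Dx /Dy /=.
have -> : (tau2^-1 * enorm (y k.+1 - y k)) ^+ 2 / tau2^-1 = tau2^-1 * enorm (y k.+1 - y k) ^+ 2.
  by field; rewrite gt_eqF.
rewrite lerD2r.
rewrite ler_pdivrMr //.
have -> : (alpha * enorm (x k.+1 - x k) ^+ 2 + beta * enorm (x k - x k.-1) ^+ 2)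
          / ((alpha + beta) * tau1) * ((alpha + beta) ^+ 2 * tau1)
          = (alpha + beta)
            * (alpha * enorm (x k.+1 - x k) ^+ 2 + beta * enorm (x k - x k.-1) ^+ 2).
  by field; rewrite !gt_eqF.
exact: sqr_wmean_le alpha_ge0 beta_ge0.
Qed.

Lemma sum_W_le N :
  \sum_(0 <= k < N) W k <= \sum_(0 <= k < N) (tau1^-1 * Dx k.+1 + tau2^-1 * Dy k.+1).
Proof.
have Dx0 : Dx 0%N = 0 by rewrite /Dx subrr enorm0 expr0n.
have := ler_wpM2l (opnorm_ge0 K) (sum_le_sum_succ Dx N Dx0 (fun k => sqr_ge0 _)).
rewrite /W !big_split /= -mulr_suml big_split /= -!mulr_sumr => shift.
rewrite lerD2r ler_pdivrMr ?mulr_gt0 //.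
have -> : tau1^-1 * (\sum_(0 <= k < N) Dx k.+1) * ((alpha + beta) * tau1)
          = (alpha + beta) * \sum_(0 <= k < N) Dx k.+1 by field; rewrite gt_eqF.
by rewrite /beta in shift *; lra.
Qed.

Lemma pdhg_stationarity_rate N : (0 < N)%N ->
  exists2 k, (k < N)%N &
  [/\ (exists v, subdiff (indic X) (x k.+1) v /\
                 res_x k = gradx Q c K rho (x k.+1) (y k.+1) + v),
      (exists w, subdiff (indic Y) (y k.+1) w /\ res_y k = - grady K r (x k.+1) + w) &
      enorm (res_x k) + enorm (res_y k) <=
        2%:R * Num.sqrt ((2%:R * opnorm K + 3%:R / (2%:R * tau1)) ^+ 2 * tau1 + tau2^-1)
        * Num.sqrt ((Lhat Q c K r rho (x 0%N) (y 0%N) - Phistar) / N%:R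
                    + 2%:R / (tau1 * N%:R) * \sum_(0 <= k < N) enorm (x k) ^+ 2
                    + 4%:R * tau2 * enorm r ^+ 2)].
Proof.
move=> N_gt0.
set S := \sum_(0 <= k < N) enorm (x k) ^+ 2.
set E := (Lhat _ _ _ _ _ _ _ - Phistar) / N%:R + _ + _.
have sum_W_le_mean : \sum_(0 <= k < N) W k <= N%:R * (4%:R * E).
  apply: (le_trans (sum_W_le N)); apply: (le_trans (energy_sum N)).
  have -> : N%:R * (4%:R * E) = 4%:R * (Phi 0%N - Phistar) + 8%:R / tau1 * S
                               + 16%:R * tau2 * enorm r ^+ 2 * N%:R.
    by rewrite /E /Phi; field; rewrite !gt_eqF ?ltr0n.
  have := Lhat_ge _ _ (x_in N) (y_in N); have := Lhat_ge _ _ (x_in 0) (y_in 0).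
  have S_ge0 : 0 <= S by apply: sumr_ge0 => k _; apply: sqr_ge0.
  have := mulr_ge0 tau1_inv_ge0 S_ge0.
  have := mulr_ge0 (mulr_ge0 (ltW tau2_gt0) (sqr_ge0 (enorm r))) (ler0n R N).
  by rewrite /Phi -/S; lra.
have [k k_lt W_le] := exists_le_mean _ _ _ N_gt0 sum_W_le_mean.
exists k => //; split; [exact: res_x_subdiff | exact: res_y_subdiff |].
apply: (le_trans (residual_le_sqrt k)).
have -> : alpha + beta = 2%:R * opnorm K + 3%:R / (2%:R * tau1) by rewrite /alpha /beta; ring.
have sqrtW_le : Num.sqrt (W k) <= 2%:R * Num.sqrt E.
  rewrite -[2%:R]ger0_norm ?ler0n // -sqrtr_sqr -sqrtrM ?sqr_ge0 //.
  by apply: ler_wsqrtr; rewrite -natrX.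
by apply: le_trans (ler_wpM2l (sqrtr_ge0 _) sqrtW_le) _; rewrite mulrCA mulrA.
Qed.

End PDHG.

Theorem mainTheorem4 (R : realType) (n m1 m2 : nat)
  (Q : 'M[R]_n) (c : 'cV[R]_n) (A : 'M[R]_(m1, n)) (b : 'cV[R]_m1)
  (B : 'M[R]_(m2, n)) (d : 'cV[R]_m2) (rho tau1 tau2 Phistar : R)
  (x : nat -> 'cV[R]_n) (y : nat -> 'cV[R]_(m1 + m2)) :
  (0 < n)%N -> (0 < m1)%N -> (0 < m2)%N ->
  Q^T = Q -> 0 <= rho -> 0 < tau1 -> 0 < tau2 ->
  let K := Kmat A B in
  let r := rvec b d in
  let L := 2%:R * (opnorm Q + rho) in
  let xbar := fun k => 2%:R *: x k - x k.-1 in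
  tau1 * tau2 * opnorm K ^+ 2 <= 2%:R^-1 ->
  tau1 <= (2%:R * L)^-1 ->
  box01 n (x 0%N) -> Yset m1 m2 (y 0%N) ->
  (forall k, (1 <= k)%N ->
     is_proj (Yset m1 m2) (y k.-1 + tau2 *: (K *m xbar k.-1 + r)) (y k)) ->
  (forall k, (1 <= k)%N ->
     is_proj (box01 n) (x k.-1 - tau1 *: gradx Q c K rho (x k.-1) (y k)) (x k)) ->
  (forall u v, box01 n u -> Yset m1 m2 v -> Phistar <= Lhat Q c K r rho u v) ->
  let sx := fun k => tau1^-1 *: (x k.-1 - x k)
                     + gradx Q c K rho (x k) (y k) - gradx Q c K rho (x k.-1) (y k) in
  let sy := fun k => tau2^-1 *: (y k.-1 - y k)
                     - grady K r (x k) + grady K r (xbar k.-1) in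
  forall N : nat, (1 <= N)%N ->
  exists k0 : nat, [/\ (1 <= k0 <= N)%N,
    (exists v, subdiff (indic (box01 n)) (x k0) v /\
               sx k0 = gradx Q c K rho (x k0) (y k0) + v),
    (exists w, subdiff (indic (Yset m1 m2)) (y k0) w /\
               sy k0 = - grady K r (x k0) + w) &
    enorm (sx k0) + enorm (sy k0) <=
      2%:R * Num.sqrt ((2%:R * opnorm K + 3%:R / (2%:R * tau1)) ^+ 2 * tau1 + tau2^-1)
           * Num.sqrt ((Lhat Q c K r rho (x 0%N) (y 0%N) - Phistar) / N%:R
                       + 2%:R / (tau1 * N%:R) * \sum_(1 <= k < N.+1) enorm (x k.-1) ^+ 2
                       + 4%:R * tau2 * enorm r ^+ 2)].
Proof.
move=> _ _ _ Q_sym rho_ge0 tau1_gt0 tau2_gt0 K r L xbar step_dual step_primal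
  x0_in y0_in y_step x_step Lhat_ge sx sy N N_gt0.
have [k k_lt [res_x_in res_y_in res_le]] :=
  pdhg_stationarity_rate (box01_convex n) (Yset_convex m1 m2) Q_sym rho_ge0
    tau1_gt0 tau2_gt0 step_dual step_primal x0_in y0_in
    (fun k => y_step k.+1 isT) (fun k => x_step k.+1 isT) Lhat_ge N N_gt0.
by exists k.+1; split; rewrite ?big_add1.
Qed.
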